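(* Let $\mathcal R=(V,E)$ be the Rado graph, let $w\notin V$, and let $\mathcal R'$ be the graph with vertex set $V\cup\{w\}$ and edge set $E\cup\{\{w,x\}:x\in V\}$. Then $\mathcal R'$ is IH-homogeneous but not IE-homogeneous.
   Context: All graphs are undirected and loopless; subgraphs are induced. The Rado graph is the unique countable graph such that for all finite disjoint vertex sets $A,B$ there is a vertex adjacent to all of $A$ and to none of $B$. $G$ is IH-homogeneous (resp. IE-homogeneous) if every isomorphism between finite induced subgraphs of $G$ is the restriction of an endomorphism (resp. a surjective endomorphism) of $G$, where an endomorphism is a map $G\to G$ sending adjacent vertices to adjacent vertices. *)

From Stdlib Require Import List.
Import ListNotations.

Definition countable (V : Type) : Prop :=
  exists f : V -> nat, forall x y, f x = f y -> x = y.

Definition is_graph {V : Type} (adj : V -> V -> Prop) : Prop :=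
  (forall x y, adj x y -> adj y x) /\ (forall x, ~ adj x x).

(* Extension property characterizing the Rado graph (among countable graphs):
   for all finite disjoint vertex sets A, B there is a vertex adjacent to all
   of A and to none of B. *)
Definition rado_property {V : Type} (adj : V -> V -> Prop) : Prop :=
  forall A B : list V,
    (forall x, In x A -> ~ In x B) ->
    exists v, (forall a, In a A -> adj v a) /\ (forall b, In b B -> ~ adj v b).

Definition is_rado_graph (V : Type) (adj : V -> V -> Prop) : Prop :=
  countable V /\ is_graph adj /\ rado_property adj.

Definition endomorphism {T : Type} (adj : T -> T -> Prop) (g : T -> T) : Prop :=
  forall x y, adj x y -> adj (g x) (g y).

Definition finite_partial_iso {T : Type} (adj : T -> T -> Prop)
    (A : list T) (f : T -> T) : Prop :=
  (forall x y, In x A -> In y A -> f x = f y -> x = y) /\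
  (forall x y, In x A -> In y A -> (adj x y <-> adj (f x) (f y))).

Definition IH_homogeneous {T : Type} (adj : T -> T -> Prop) : Prop :=
  forall (A : list T) (f : T -> T), finite_partial_iso adj A f ->
    exists g : T -> T, endomorphism adj g /\ (forall x, In x A -> g x = f x).

Definition IE_homogeneous {T : Type} (adj : T -> T -> Prop) : Prop :=
  forall (A : list T) (f : T -> T), finite_partial_iso adj A f ->
    exists g : T -> T, endomorphism adj g /\ (forall y, exists x, g x = y) /\
      (forall x, In x A -> g x = f x).

(* R' : add a new vertex w (= None) adjacent to every vertex of V. *)
Definition add_universal {V : Type} (adj : V -> V -> Prop) :
    option V -> option V -> Prop :=
  fun x y => match x, y with
             | Some a, Some b => adj a b
             | None, Some _ => True
             | Some _, None => True
             | None, None => False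
             end.

(* Extensions are built by mapping every vertex outside the domain injectively
   onto an infinite clique all of whose vertices are adjacent to the image of
   the domain; the Rado extension property provides such a clique inside R, and
   in R' every vertex of R is adjacent to the new vertex w as well. Conversely
   a surjective endomorphism maps a vertex adjacent to all others to a vertex
   adjacent to all others, and w is the only such vertex of R'; so the partial
   isomorphism sending w to a vertex of R has no surjective extension. *)
From Stdlib Require Import List ClassicalEpsilon.
Import ListNotations.

Definition universal {T : Type} (adj : T -> T -> Prop) (u : T) : Prop :=
  forall x, x <> u -> adj u x.

Definition cone_clique {T : Type} (adj : T -> T -> Prop) (F : list T)
    (k : nat -> T) : Prop :=
  (forall n m, n <> m -> adj (k n) (k m)) /\ (forall n x, In x F -> adj (k n) x).

Lemma IH_homogeneous_of_cone_cliques {T : Type} (adj : T -> T -> Prop) :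
  is_graph adj -> countable T ->
  (forall F : list T, exists k, cone_clique adj F k) ->
  IH_homogeneous adj.
Proof.
  intros [adj_sym adj_irrefl] [code code_inj] cliques A f [_ f_iso].
  destruct (cliques (map f A)) as [k [k_clique k_cone]].
  assert (cone : forall a n, In a A -> adj (k n) (f a))
    by (intros; apply k_cone, in_map; assumption).
  exists (fun x => if excluded_middle_informative (In x A) then f x else k (code x)).
  split.
  - intros x y xy.
    destruct (excluded_middle_informative (In x A)) as [xA|xA],
             (excluded_middle_informative (In y A)) as [yA|yA].
    + apply (f_iso x y xA yA), xy.
    + apply adj_sym, cone; assumption.
    + apply cone; assumption.
    + apply k_clique; intros codes.
      apply code_inj in codes; subst y; exact (adj_irrefl x xy).
  - intros x xA; destruct excluded_middle_informative; tauto.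
Qed.

Lemma endomorphism_surjective_universal {T : Type} (adj : T -> T -> Prop)
    (g : T -> T) (u : T) :
  endomorphism adj g -> (forall y, exists x, g x = y) ->
  universal adj u -> universal adj (g u).
Proof.
  intros g_hom g_surj u_univ y y_ne.
  destruct (g_surj y) as [x <-].
  apply g_hom, u_univ; intros ->; exact (y_ne eq_refl).
Qed.

Lemma finite_partial_iso_singleton {T : Type} (adj : T -> T -> Prop)
    (a : T) (f : T -> T) :
  (forall x, ~ adj x x) -> finite_partial_iso adj [a] f.
Proof.
  intros adj_irrefl; split; intros x y [<- | []] [<- | []].
  - reflexivity.
  - split; intros loop; destruct (adj_irrefl _ loop).
Qed.

Section RadoProperty.

Variables (V : Type) (E : V -> V -> Prop).
Hypothesis rado : rado_property E.

Lemma rado_common_neighbour (l : list V) : exists v, forall a, In a l -> E v a.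
Proof.
  destruct (rado l []) as [v [v_adj _]]; [intros x _ [] | exists v; exact v_adj].
Qed.

Lemma rado_inhabited : inhabited V.
Proof. destruct (rado_common_neighbour []) as [v _]; exact (inhabits v). Qed.

Definition common_neighbour (l : list V) : V :=
  epsilon rado_inhabited (fun v => forall a, In a l -> E v a).

Lemma common_neighbourP (l : list V) a : In a l -> E (common_neighbour l) a.
Proof. revert a; exact (epsilon_spec _ _ (rado_common_neighbour l)). Qed.

Variable F : list V.

Fixpoint clique_prefix (n : nat) : list V :=
  match n with
  | 0 => []
  | S m => common_neighbour (F ++ clique_prefix m) :: clique_prefix m
  end.

Definition clique_vertex (n : nat) : V := common_neighbour (F ++ clique_prefix n).

Lemma in_clique_prefix m n : m < n -> In (clique_vertex m) (clique_prefix n).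
Proof.
  induction n as [|n IHn]; intros m_lt; [inversion m_lt|].
  inversion m_lt as [|p m_le]; [left; reflexivity | right; apply IHn; exact m_le].
Qed.

Lemma clique_vertex_adj_prefix m n : m < n -> E (clique_vertex n) (clique_vertex m).
Proof. intros m_lt; apply common_neighbourP, in_or_app; right; apply in_clique_prefix, m_lt. Qed.

Lemma rado_cone_clique :
  (forall x y, E x y -> E y x) -> cone_clique E F clique_vertex.
Proof.
  intros E_sym; split.
  - intros n m nm.
    destruct (Compare_dec.lt_eq_lt_dec n m) as [[n_lt | ->] | m_lt].
    + apply E_sym, clique_vertex_adj_prefix, n_lt.
    + contradiction.
    + apply clique_vertex_adj_prefix, m_lt.
  - intros n x xF; apply common_neighbourP, in_or_app; left; exact xF.
Qed.

End RadoProperty.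

Lemma countable_option (V : Type) : countable V -> countable (option V).
Proof.
  intros [code code_inj].
  exists (fun x => match x with None => 0 | Some v => S (code v) end).
  intros [x|] [y|] codes; try discriminate; [|reflexivity].
  injection codes as codes; rewrite (code_inj _ _ codes); reflexivity.
Qed.

Section AddUniversal.

Variables (V : Type) (E : V -> V -> Prop).
Hypotheses (E_graph : is_graph E) (rado : rado_property E).

Lemma is_graph_add_universal : is_graph (add_universal E).
Proof.
  destruct E_graph as [E_sym E_irrefl].
  split; [intros [x|] [y|]; simpl; auto | intros [x|]; simpl; auto].
Qed.

Lemma add_universal_cone_clique (F : list (option V)) :
  exists k, cone_clique (add_universal E) F k.
Proof.
  set (F' := flat_map (fun x => match x with Some v => [v] | None => [] end) F).
  destruct (rado_cone_clique V E rado F' (proj1 E_graph)) as [k_clique k_cone].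
  exists (fun n => Some (clique_vertex V E rado F' n)); split.
  - intros n m nm; exact (k_clique n m nm).
  - intros n [v|] xF; simpl; [|exact I].
    apply k_cone, in_flat_map; exists (Some v); split; [exact xF | left; reflexivity].
Qed.

Lemma universal_add_universal_None : universal (add_universal E) None.
Proof. intros [v|] ne; [exact I | contradiction]. Qed.

Lemma not_universal_add_universal_Some (v : V) : ~ universal (add_universal E) (Some v).
Proof.
  destruct E_graph as [E_sym E_irrefl].
  intros v_univ.
  destruct (rado [v] []) as [w [w_adj _]]; [intros x _ [] |].
  destruct (rado [] [v; w]) as [z [_ z_nadj]]; [intros x [] |].
  assert (vw : E v w) by (apply E_sym, w_adj; left; reflexivity).
  apply (z_nadj v); [left; reflexivity |].
  apply E_sym, (v_univ (Some z)).
  intros [= ->]; apply (z_nadj w); [right; left; reflexivity | exact vw].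
Qed.

End AddUniversal.

Theorem mainTheorem20 (V : Type) (E : V -> V -> Prop) :
  is_rado_graph V E ->
  IH_homogeneous (add_universal E) /\ ~ IE_homogeneous (add_universal E).
Proof.
  intros [V_countable [E_graph rado]]; split.
  - apply IH_homogeneous_of_cone_cliques.
    + apply is_graph_add_universal, E_graph.
    + apply countable_option, V_countable.
    + apply add_universal_cone_clique; assumption.
  - intros IE.
    destruct (rado_inhabited V E rado) as [v].
    destruct (IE [None] (fun _ => Some v)) as [g [g_hom [g_surj g_ext]]].
    { apply finite_partial_iso_singleton, is_graph_add_universal, E_graph. }
    apply (not_universal_add_universal_Some V E E_graph rado v).
    rewrite <- (g_ext None) by (left; reflexivity).
    apply endomorphism_surjective_universal; try assumption.
    apply universal_add_universal_None.
Qed.
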